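(* Let $q$ be a prime power, $k,m,n$ positive integers, and let $U$ be an $[n,k]_{q^m/q}$ system. Then $U$ is $(k-2,\,n-m-1)_q$-evasive if and only if $U$ is cutting.
   Context: An $[n,k]_{q^m/q}$ system is an $\mathbb F_q$-subspace $U$ of $\mathbb F_{q^m}^k$ with $\dim_{\mathbb F_q}(U)=n$ and $\langle U\rangle_{\mathbb F_{q^m}}=\mathbb F_{q^m}^k$. $U$ is $(h,r)_q$-evasive if $\dim_{\mathbb F_q}(U\cap H)\le r$ for every $\mathbb F_{q^m}$-subspace $H$ of $\mathbb F_{q^m}^k$ with $\dim_{\mathbb F_{q^m}}(H)=h$. $U$ is called cutting (a linear cutting blocking set) if for every $\mathbb F_{q^m}$-hyperplane $H$ of $\mathbb F_{q^m}^k$ one has $\langle H\cap U\rangle_{\mathbb F_{q^m}}=H$. *)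

From HB Require Import structures.
From mathcomp Require Import all_boot all_order all_algebra all_field.
Set Implicit Arguments. Unset Strict Implicit. Unset Printing Implicit Defensive.
Import GRing.Theory.
Local Open Scope ring_scope.

(* Setting: F = F_q a finite field, L = F_{q^m} a finite-dimensional field
   extension of F (so m = \dim {:L}).  The ambient space F_{q^m}^k is
   modelled as V := {ffun 'I_k -> L}, which is canonically an F-vector space
   (vectType F); F_q-subspaces of F_{q^m}^k are {vspace V}.
   F_{q^m}-subspaces of F_{q^m}^k are modelled as row spaces of matrices
   H : 'M[L]_k (their L-dimension is \rank H). *)

Section Systems.
Variables (F : finFieldType) (L : fieldExtType F) (k : nat).

Definition amb := {ffun 'I_k -> L}.

Definition rowv (v : amb) : 'rV[L]_k := \row_i v i.

(* matrix over L whose rows are an F-basis of the F-subspace U;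
   its row space is the L-span <U>_{F_{q^m}} *)
Definition spanL (U : {vspace amb}) : 'M[L]_(\dim U, k) :=
  \matrix_(i < \dim U) rowv (tnth (vbasis U) i).

(* the L-subspace (row space of H) seen as an F-subspace of amb:
   the kernel of the (linear) map v |-> rowv v *m cokermx H,
   i.e. the set of v with (rowv v <= H)%MS *)
Definition Lsub_map (H : 'M[L]_k) (v : amb) : amb :=
  [ffun i => (rowv v *m cokermx H) 0 i].

Definition vsL (H : 'M[L]_k) : {vspace amb} := lker (linfun (Lsub_map H)).

Definition is_system (n : nat) (U : {vspace amb}) : Prop :=
  \dim U = n /\ row_full (spanL U).

Definition evasive (U : {vspace amb}) (h r : int) : Prop :=
  forall H : 'M[L]_k, (\rank H)%:Z = h -> (\dim (U :&: vsL H)%VS)%:Z <= r.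

Definition cutting (U : {vspace amb}) : Prop :=
  forall H : 'M[L]_k, \rank H = k.-1 -> (spanL (U :&: vsL H)%VS == H)%MS.

End Systems.

From HB Require Import structures.
From mathcomp Require Import all_boot all_order all_algebra all_field.
From mathcomp Require Import zify.
Set Implicit Arguments. Unset Strict Implicit. Unset Printing Implicit Defensive.
Import GRing.Theory.
Local Open Scope ring_scope.

(* Every L-hyperplane H meets U in F-dimension at least n - m, because
   v |-> v + H embeds U / (U :&: H) into L^k / H ~ L.  If U is evasive and the
   L-span of U :&: H were a proper subspace of H, it would lie in a
   (k-2)-space W <= H with U :&: W = U :&: H, of dimension >= n - m.
   Conversely, if dim (U :&: W) >= n - m for a (k-2)-space W, a complement C
   of U :&: W in U has at most q^m vectors, while the hyperplanes through W
   form a projective line over L, with q^m + 1 points; each nonzero vector of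
   C lies in exactly one of them, so some hyperplane H through W avoids C.
   Then U :&: H = U :&: W spans at most W, and U is not cutting. *)

Lemma rank_cV (K : fieldType) n (c : 'cV[K]_n) : \rank c = (c != 0).
Proof. by rewrite -mxrank_tr rank_rV trmx_eq0. Qed.

Lemma exists_corank1_submx (K : fieldType) n p (P : 'M[K]_(p, n)) (H : 'M[K]_n) :
  (P <= H)%MS -> ~~ (H <= P)%MS ->
  exists W : 'M_n, [/\ \rank W = (\rank H).-1, (P <= W)%MS & (W <= H)%MS].
Proof.
move=> sPH; rewrite submxE => nzHC.
have [j nz_col] : exists j, col j (H *m cokermx P) != 0.
  apply/existsP; apply: contraNT nzHC => /existsPn zero_cols.
  apply/eqP/matrixP => i j; move: (zero_cols j) => /negPn/eqP/matrixP/(_ i 0).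
  by rewrite !mxE.
set c := col j (cokermx P).
have rHc : \rank (H *m c) = 1%N.
  by rewrite rank_cV /c colE mulmxA -colE nz_col.
exists (H :&: kermx c)%MS; split; last exact: capmxSl.
- by have := mxrank_mul_ker H c; rewrite rHc add1n => <-.
- by rewrite sub_capmx sPH sub_kermx /c colE mulmxA mulmx_coker mul0mx eqxx.
Qed.

Lemma exists_col_free_annihilator (K : fieldType) n r (W : 'M[K]_n) :
  (\rank W + r = n)%N ->
  exists B : 'M[K]_(n, r),
    (forall p (A : 'M_(p, n)), (A <= W)%MS = (A *m B == 0)) /\
    (forall d : 'cV_r, (B *m d == 0) = (d == 0)).
Proof.
move=> rWr; set C := cokermx W.
have rC : \rank C = r by rewrite mxrank_coker; lia.
have := mulmx_base C; have := row_base_free C; have := col_base_full C.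
move: (col_base C) (row_base C); rewrite rC => B R B_full R_free defC.
exists B; split=> [p A | d].
  by rewrite submxE -/C -defC mulmxA mulmx_free_eq0.
have Bt_free : row_free B^T by rewrite /row_free mxrank_tr.
by rewrite -trmx_eq0 trmx_mul mulmx_free_eq0 // trmx_eq0.
Qed.

Lemma subv_cap_diff (K : fieldType) (vT : vectType K) (U X Y : {vspace vT}) :
  (X <= Y)%VS -> ((U :\: X) :&: Y = 0)%VS -> (U :&: Y <= X)%VS.
Proof.
move=> sXY diffY0; apply/subvP => v /memv_capP[].
rewrite -{1}(addv_diff_cap U X) => /memv_addP[c c_diff [w /memv_capP[_ wX] ->]] vY.
have cY : c \in Y by rewrite -(addrK w c) memvB // (subvP sXY).
have -> : c = 0 by apply/eqP; rewrite -memv0 -diffY0 memv_cap c_diff.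
by rewrite add0r.
Qed.

(* [option K] is the projective line K u {oo}: [slope p] is the point of the
   nonzero row [p], and [slope_dir t] spans the common kernel of the rows of
   slope [t]. *)
Definition slope (K : fieldType) (p : 'rV[K]_2) : option K :=
  if p 0 0 == 0 then None else Some (p 0 1 / p 0 0).

Definition slope_dir (K : fieldType) (t : option K) : 'cV[K]_2 :=
  if t is Some a then \col_i (if i == 0 then - a else 1)
  else \col_i (if i == 0 then 1 else 0).

Lemma slope_dir_neq0 (K : fieldType) (t : option K) : slope_dir t != 0.
Proof.
apply/eqP => /matrixP; case: t => [a /(_ 1 0)|/(_ 0 0)]; rewrite !mxE /=.
  by move/eqP; rewrite oner_eq0.
by move/eqP; rewrite oner_eq0.
Qed.

Lemma rV2_eq0 (K : fieldType) (p : 'rV[K]_2) :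
  (p == 0) = (p 0 0 == 0) && (p 0 1 == 0).
Proof.
apply/eqP/andP => [->|[/eqP p0 /eqP p1]]; first by rewrite !mxE.
apply/rowP => -[[|[|//]] i2]; rewrite mxE; [rewrite -p0 | rewrite -p1];
  by congr (p 0 _); apply: val_inj.
Qed.

Lemma mulmx_rV2_cV2_eq0 (K : fieldType) (p : 'rV[K]_2) (d : 'cV[K]_2) :
  (p *m d == 0) = (p 0 0 * d 0 0 + p 0 1 * d 1 0 == 0).
Proof.
have -> : (p *m d == 0) = ((p *m d) 0 0 == 0).
  apply/eqP/eqP => [->|pd0]; first by rewrite mxE.
  by apply/rowP => i; rewrite ord1 pd0 mxE.
rewrite mxE !big_ord_recl big_ord0 addr0.
by congr (_ + p 0 _ * d _ 0 == 0); apply: val_inj.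
Qed.

Lemma slopeP (K : fieldType) (p : 'rV[K]_2) t :
  p != 0 -> p *m slope_dir t == 0 -> slope p = t.
Proof.
rewrite rV2_eq0 mulmx_rV2_cV2_eq0 /slope /slope_dir.
case: t => [a|]; rewrite !mxE /= ?mulr1 ?mulr0 ?addr0; last by move=> _ ->.
have [->|nz_p0] := eqVneq (p 0 0) 0; first by rewrite mul0r add0r => /= /negbTE ->.
by move=> _; rewrite mulrN addrC subr_eq0 => /eqP ->; rewrite mulrC mulKf.
Qed.

Section Systems.
Variables (F : finFieldType) (L : fieldExtType F) (k : nat).
Local Notation V := (amb L k).

Lemma rowv_is_nmod_morphism : nmod_morphism (@rowv F L k).
Proof. by split=> [|u v]; apply/rowP => i; rewrite !mxE ?ffunE. Qed.
HB.instance Definition _ :=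
  GRing.isNmodMorphism.Build V 'rV[L]_k (@rowv F L k) rowv_is_nmod_morphism.

Lemma rowvZ (a : F) (v : V) : rowv (a *: v) = a%:A *: rowv v.
Proof. by apply/rowP => i; rewrite !mxE ffunE mulr_algl. Qed.

Definition mulmxv r (M : 'M[L]_(k, r)) (v : V) : {ffun 'I_r -> L} :=
  [ffun i => (rowv v *m M) 0 i].

Lemma mulmxv_is_linear r (M : 'M[L]_(k, r)) : linear (mulmxv M).
Proof.
move=> a u v; apply/ffunP => i.
by rewrite !ffunE raddfD /= rowvZ mulmxDl -scalemxAl !mxE mulr_algl.
Qed.
HB.instance Definition _ r M :=
  GRing.isLinear.Build F V {ffun 'I_r -> L} _ (@mulmxv r M) (mulmxv_is_linear M).

Lemma mem_lker_mulmxv r (M : 'M[L]_(k, r)) v :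
  (v \in lker (linfun (mulmxv M))) = (rowv v *m M == 0).
Proof.
rewrite memv_ker lfunE /= /mulmxv; apply/eqP/eqP => vM0.
  by apply/rowP => i; move/ffunP/(_ i): vM0; rewrite !ffunE => ->; rewrite mxE.
by apply/ffunP => i; rewrite /mulmxv !ffunE vM0 mxE.
Qed.

Lemma mem_vsL (H : 'M[L]_k) v : (v \in vsL H) = (rowv v <= H)%MS.
Proof. by rewrite submxE -mem_lker_mulmxv. Qed.

Lemma vsLS (W H : 'M[L]_k) : (W <= H)%MS -> (vsL W <= vsL H)%VS.
Proof.
move=> sWH; apply/subvP => v vW; rewrite mem_vsL in vW.
by rewrite mem_vsL (submx_trans vW).
Qed.

Lemma spanL_subP (S : {vspace V}) m (X : 'M[L]_(m, k)) :
  reflect {in S, forall v, (rowv v <= X)%MS} (spanL S <= X)%MS.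
Proof.
apply: (iffP row_subP) => [sSX v /coord_vbasis -> | sSX i].
  rewrite raddf_sum /= summx_sub // => i _; rewrite rowvZ scalemx_sub //.
  by rewrite -tnth_nth -(rowK (fun i => rowv (tnth (vbasis S) i))) sSX.
by rewrite rowK sSX // vbasis_mem ?mem_tnth.
Qed.

Lemma rowv_sub_spanL (S : {vspace V}) v : v \in S -> (rowv v <= spanL S)%MS.
Proof. exact: (elimT (spanL_subP S _) (submx_refl _)). Qed.

Lemma spanL_cap_vsL (U : {vspace V}) (H : 'M[L]_k) :
  (spanL (U :&: vsL H) <= H)%MS.
Proof. by apply/spanL_subP => v; rewrite memv_cap mem_vsL => /andP[]. Qed.

Lemma dim_cap_vsL (U : {vspace V}) (H : 'M[L]_k) :
  (\dim U <= \dim (U :&: vsL H) + (k - \rank H) * \dim {:L})%N.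
Proof.
have [B [annB _]] := exists_col_free_annihilator (subnKC (rank_leq_col H)).
pose f := linfun (mulmxv B).
have kerf : lker f = vsL H.
  by apply/vspaceP => v; rewrite mem_lker_mulmxv mem_vsL annB.
rewrite -(limg_ker_dim f U) kerf leq_add2l.
apply: leq_trans (dimvS (subvf _)) _.
by rewrite dimvf /dim /= card_ord dimvf.
Qed.

Lemma evasive_cutting (U : {vspace V}) :
  evasive U (k%:Z - 2) ((\dim U)%:Z - (\dim {:L})%:Z - 1) -> cutting U.
Proof.
move=> ev H rH; have sPH := spanL_cap_vsL U H.
apply/andP; split=> //; apply: contraT => nsHP.
have nzH : \rank H != 0%N.
  by rewrite mxrank_eq0; apply: contraNneq nsHP => ->; apply: sub0mx.
have [W [rW sPW sWH]] := exists_corank1_submx sPH nsHP.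
have sUHW : (U :&: vsL H <= U :&: vsL W)%VS.
  rewrite subv_cap capvSl; apply/subvP => v vUH.
  by rewrite mem_vsL (submx_trans (rowv_sub_spanL vUH) sPW).
have := ev W; have := dim_cap_vsL U H; have := dimvS sUHW.
by move: nzH; rewrite rW rH; lia.
Qed.

Lemma exists_value_avoided (f : V -> option L) (C : {vspace V}) :
  (\dim C <= \dim {:L})%N -> exists t, {in C, forall v, f v != t}.
Proof.
move=> dimC; pose g : finvect_type V -> option (finvect_type L) := f.
pose Cs := [set v : finvect_type V | v \in C].
have [t t_fresh | all_hit] := pickP (fun t => t \notin g @: Cs).
  exists t => v Cv; apply: contra t_fresh => /eqP <-.
  by apply: imset_f; rewrite inE.
have card_line : #|{: option (finvect_type L)}| = (#|F| ^ \dim {:L}).+1.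
  rewrite card_option -(@card_vspacef F (finvect_type L) (Vector.class _)).
  by rewrite card_vspace !dimvf.
have card_C : #|Cs| = (#|F| ^ \dim C)%N.
  by rewrite cardsE (card_vspace (C : {vspace finvect_type V})).
have : (#|{: option (finvect_type L)}| <= #|Cs|)%N.
  rewrite -cardsT; apply: leq_trans (leq_imset_card g Cs).
  by apply: subset_leq_card; apply/subsetP => t _; apply/negbFE/all_hit.
have q_gt0 : (0 < #|F|)%N by apply/card_gt0P; exists 0.
by rewrite card_line card_C; have := leq_pexp2l q_gt0 dimC; lia.
Qed.

Lemma exists_hyperplane_avoiding (W : 'M[L]_k) (C : {vspace V}) :
  (\rank W + 2 = k)%N -> (\dim C <= \dim {:L})%N -> (C :&: vsL W = 0)%VS ->
  exists H : 'M[L]_k, [/\ \rank H = k.-1, (W <= H)%MS & (C :&: vsL H = 0)%VS].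
Proof.
move=> rW dimC CW0.
have [B [annB freeB]] := exists_col_free_annihilator rW.
have [t avoid_t] := exists_value_avoided (fun v => slope (rowv v *m B)) dimC.
pose c := B *m slope_dir t.
have nz_c : c != 0 by rewrite freeB slope_dir_neq0.
exists (kermx c); split.
- by rewrite mxrank_ker rank_cV nz_c subn1.
- have WB0 : W *m B = 0 by apply/eqP; rewrite -annB.
  by rewrite sub_kermx mulmxA WB0 mul0mx eqxx.
apply/eqP; rewrite -subv0; apply/subvP => v /memv_capP[Cv].
rewrite mem_vsL sub_kermx mulmxA memv0 => vc0.
have [vB0 | nz_vB] := eqVneq (rowv v *m B) 0.
  by rewrite -memv0 -CW0 memv_cap Cv mem_vsL annB vB0 eqxx.
by case/eqP: (avoid_t v Cv); apply: slopeP.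
Qed.

Lemma cutting_evasive (U : {vspace V}) :
  cutting U -> evasive U (k%:Z - 2) ((\dim U)%:Z - (\dim {:L})%:Z - 1).
Proof.
move=> cut W rW; have rW2 : (\rank W + 2 = k)%N by lia.
suff : (\dim (U :&: vsL W) + \dim {:L} < \dim U)%N by lia.
rewrite ltnNge; apply/negP => dimUW.
have dimC : (\dim (U :\: vsL W) <= \dim {:L})%N.
  by have := dimv_cap_compl U (vsL W); lia.
have [H [rH sWH CH0]] := exists_hyperplane_avoiding rW2 dimC (capv_diff U _).
have sUHW := subv_cap_diff (vsLS sWH) CH0.
have sPW : (spanL (U :&: vsL H) <= W)%MS.
  by apply/spanL_subP => v /(subvP sUHW) vW; rewrite mem_vsL in vW.
case/andP: (cut H rH) => _ /submx_trans/(_ sPW)/mxrankS.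
by rewrite rH; lia.
Qed.

End Systems.

Theorem theorem3p3 (F : finFieldType) (L : fieldExtType F) (k m n : nat)
    (U : {vspace amb L k}) :
  (0 < k)%N -> (0 < m)%N -> (0 < n)%N ->
  \dim {:L} = m ->
  is_system n U ->
  (evasive U (k%:Z - 2) (n%:Z - m%:Z - 1) <-> cutting U).
Proof.
move=> _ _ _ <- [<- _].
by split; [apply: evasive_cutting | apply: cutting_evasive].
Qed.
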